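(* Let $n\ge1$ be an integer and $\alpha<0$. Then the polynomial $\mathcal{R}_n(w)=w^2R_n'(w)+\alpha R_n(w)$ has exactly one positive root. Its coefficients are $$\mathcal{R}_n(w)=\sum_{k=0}^{n+1}b_{k,n}w^k,\qquad b_{k,n}=\frac{(n+k-1)!}{(n-k+1)!\,k!}\bigl(k(k-1)+\alpha(n+k)(n-k+1)\bigr),$$ for $1\le k\le n+1$, with $b_{0,n}=\alpha$.
   Context: $R_n(w)=\sum_{m=0}^n\frac{(n+m)!}{m!\,(n-m)!}w^m$. *)

(* real numbers modelled by an arbitrary real closed field. *)
From HB Require Import structures.
From mathcomp Require Import all_boot all_order all_algebra.
Set Implicit Arguments. Unset Strict Implicit. Unset Printing Implicit Defensive.
Import Order.TTheory GRing.Theory Num.Theory.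
Local Open Scope ring_scope.

Definition Rpoly (R : rcfType) (n : nat) : {poly R} :=
  \sum_(m < n.+1) (((n + m)`!)%:R / ((m`!)%:R * ((n - m)`!)%:R)) *: 'X^m.

Definition calR (R : rcfType) (n : nat) (a : R) : {poly R} :=
  'X^2 * (Rpoly R n)^`() + a *: Rpoly R n.

Definition bcoef (R : rcfType) (n : nat) (a : R) (k : nat) : R :=
  if k == 0%N then a
  else (((n + k).-1)`!)%:R / ((((n.+1 - k)`!)%:R) * ((k`!)%:R))
       * ((k * k.-1)%:R + a * ((n + k) * (n.+1 - k))%:R).

(* Multiplying by w^2 after differentiating sends a_k w^k to k a_k w^(k+1), which
   gives the coefficients b_{k,n}. Since alpha < 0, the bracket
   k(k-1) + alpha(n+k)(n-k+1) is increasing in k, so the coefficient sequence is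
   negative at k = 0, positive at k = n+1, and changes sign exactly once. For such a
   polynomial p, if the sign change happens at index j, then p(x)/x^j is strictly
   increasing on (0, oo) (each term b_k x^(k-j) is nondecreasing, the constant one
   strictly increasing); hence p has at most one positive root, and it has one by the
   intermediate value theorem since p(0) < 0 < p(oo). *)
From HB Require Import structures.
From mathcomp Require Import all_boot all_order all_algebra.
From mathcomp Require Import polyrcf ring zify.
Set Implicit Arguments. Unset Strict Implicit. Unset Printing Implicit Defensive.
Import Order.TTheory GRing.Theory Num.Theory.
Local Open Scope ring_scope.

Section OneSignChange.
Variable R : realDomainType.

Lemma expr_cross_le (x y : R) (k j : nat) : 0 <= x -> x <= y -> (k <= j)%N ->
  y ^+ k * x ^+ j <= x ^+ k * y ^+ j.
Proof.
move=> x0 xy /subnK <-; rewrite !exprD.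
have -> : y ^+ k * (x ^+ (j - k) * x ^+ k) = x ^+ k * y ^+ k * x ^+ (j - k) by ring.
have -> : x ^+ k * (y ^+ (j - k) * y ^+ k) = x ^+ k * y ^+ k * y ^+ (j - k) by ring.
have y0 : 0 <= y := le_trans x0 xy.
by apply: ler_wpM2l; [rewrite mulr_ge0 ?exprn_ge0 | apply: lerXn2r; rewrite ?nnegrE].
Qed.

Lemma one_sign_change_term_le (b : nat -> R) (j k : nat) (x y : R) :
  (forall k, (k < j)%N -> b k <= 0) -> (forall k, (j <= k)%N -> 0 <= b k) ->
  0 <= x -> x <= y -> b k * x ^+ k * y ^+ j <= b k * y ^+ k * x ^+ j.
Proof.
move=> bneg bpos x0 xy; rewrite -!mulrA.
case: (ltnP k j) => kj.
  by apply: ler_wnM2l; [exact: bneg | rewrite expr_cross_le // ltnW].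
by apply: ler_wpM2l; [exact: bpos | rewrite mulrC [_ * x ^+ j]mulrC expr_cross_le].
Qed.

Lemma horner_one_sign_change_lt (p : {poly R}) (j : nat) (x y : R) :
  (0 < j)%N -> p`_0 < 0 ->
  (forall k, (k < j)%N -> p`_k <= 0) -> (forall k, (j <= k)%N -> 0 <= p`_k) ->
  0 < x -> x < y -> p.[x] * y ^+ j < p.[y] * x ^+ j.
Proof.
move=> j0 p0 pneg ppos x0 xy.
have [N sizeN] : exists N, size p = N.+1.
  exists (size p).-1; rewrite prednK // size_poly_gt0.
  by apply: contraTneq p0 => ->; rewrite coef0 ltxx.
rewrite !horner_coef sizeN !mulr_suml !big_ord_recl !expr0 !mulr1 /=.
apply: ltr_leD; first by rewrite ltr_nM2l // ltrXn2r ?ltW // -lt0n.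
by apply: ler_sum => i _; apply: one_sign_change_term_le; rewrite ?ltW.
Qed.

End OneSignChange.

Lemma pos_root_of_neg_const (R : rcfType) (p : {poly R}) :
  p`_0 < 0 -> 0 < lead_coef p -> exists2 w, 0 < w & root p w.
Proof.
move=> p0 lc0; have [N leN] := poly_pinfty_gt_lc lc0.
set y := Num.max N 1.
have py : 0 < p.[y] by apply: lt_le_trans lc0 (leN _ _); rewrite le_max lexx.
have pp : p.[0] <= 0 <= p.[y] by rewrite horner_coef0 !ltW.
have y0 : 0 <= y by rewrite le_max ler01 orbT.
have [w /andP[w0 _] rw] := poly_ivt y0 pp.
exists w => //; rewrite lt_neqAle w0 andbT.
by apply: contraTneq rw => <-; rewrite /root horner_coef0 lt_eqF.
Qed.

Lemma one_sign_change_unique_pos_root (R : rcfType) (p : {poly R}) :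
  p`_0 < 0 -> 0 < lead_coef p ->
  (forall k l, (0 < k <= l)%N -> 0 <= p`_k -> 0 <= p`_l) ->
  exists! w, 0 < w /\ root p w.
Proof.
move=> p0 lc0 pmono.
have [j pj jmin] := ex_minnP (ex_intro (fun k => 0 <= p`_k) _ (ltW lc0)).
have j0 : (0 < j)%N by rewrite lt0n; apply: contraTneq pj => ->; rewrite -ltNge.
have pneg k : (k < j)%N -> p`_k <= 0.
  by move=> kj; rewrite leNgt; apply: contraTN kj => /ltW /jmin; rewrite -leqNgt.
have ppos k : (j <= k)%N -> 0 <= p`_k by move=> jk; apply: pmono pj; rewrite j0.
have [w w0 rw] := pos_root_of_neg_const p0 lc0.
exists w; split=> // z [z0 rz].
have no_lt x y : 0 < x -> root p x -> x < y -> root p y -> False.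
  move=> x0 /rootP px xy /rootP py.
  by have := horner_one_sign_change_lt j0 p0 pneg ppos x0 xy; rewrite px py !mul0r ltxx.
by case: (ltgtP w z) => // [wz | zw]; [case: (no_lt w z) | case: (no_lt z w)].
Qed.

Lemma coef_sqrX_deriv (R : nzRingType) (p : {poly R}) (i : nat) :
  ('X^2 * p^`())`_i = p`_i.-1 *+ i.-1.
Proof. by rewrite coefXnM coef_deriv; case: i => [|[|i]] //; rewrite !subSS subn0. Qed.

Section Coefficients.
Variables (R : rcfType) (n : nat) (a : R).

Lemma coef_Rpoly (m : nat) : (Rpoly R n)`_m =
  if (m <= n)%N then ((n + m)`!)%:R / ((m`!)%:R * ((n - m)`!)%:R) else 0.
Proof.
set E := fun m : nat => ((n + m)`!)%:R / ((m`!)%:R * ((n - m)`!)%:R) : R.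
by rewrite -[RHS]/(if (m < n.+1)%N then E m else 0) -coef_poly poly_def.
Qed.

Lemma coef_calR (i : nat) :
  (calR n a)`_i = (Rpoly R n)`_i.-1 *+ i.-1 + a * (Rpoly R n)`_i.
Proof. by rewrite coefD coefZ coef_sqrX_deriv. Qed.

Let fact_neq0 (k : nat) : (k`!)%:R != 0 :> R.
Proof. by rewrite pnatr_eq0 -lt0n fact_gt0. Qed.

(* The common factor of the two contributions to the coefficient of w^(k+1). *)
Let c (k : nat) : R := ((n + k)`!)%:R / (((n - k)`!)%:R * ((k.+1)`!)%:R).

Let c_gt0 (k : nat) : 0 < c k.
Proof. by rewrite divr_gt0 ?mulr_gt0 ?ltr0n ?fact_gt0. Qed.

Let bcoefS (k : nat) :
  bcoef n a k.+1 = c k * ((k.+1 * k)%:R + a * ((n + k.+1) * (n - k))%:R).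
Proof. by rewrite /bcoef /c addnS /= subSS mulrC [_ * (_`!)%:R]mulrC. Qed.

Let coef_Rpoly_mulrn (k : nat) : (k <= n)%N ->
  (Rpoly R n)`_k *+ k = c k * (k.+1 * k)%:R.
Proof.
move=> kn; rewrite coef_Rpoly kn /c factS !natrM -mulr_natr.
by field; rewrite !fact_neq0 nat1r pnatr_eq0.
Qed.

Let coef_Rpoly_succ (k : nat) : (k <= n)%N ->
  (Rpoly R n)`_k.+1 = c k * ((n + k.+1) * (n - k))%:R.
Proof.
rewrite leq_eqVlt => /orP[/eqP -> | kn]; first by rewrite coef_Rpoly ltnn subnn muln0 mulr0.
have [e ne] : exists e, n = (k + e).+1 by exists (n - k).-1; lia.
rewrite coef_Rpoly kn /c ne (_ : (k + e).+1 - k.+1 = e)%N; last lia.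
rewrite (_ : (k + e).+1 - k = e.+1)%N; last lia.
rewrite addnS factS [e.+1`!]factS !natrM.
by field; rewrite !fact_neq0 ?nat1r ?pnatr_eq0.
Qed.

Lemma calR_poly : calR n a = \poly_(k < n.+2) bcoef n a k.
Proof.
apply/polyP => -[|k]; rewrite coef_calR coef_poly.
  by rewrite mulr0n add0r coef_Rpoly /bcoef /= addn0 subn0 mul1r divff ?mulr1.
rewrite !ltnS; case: (leqP k n) => kn.
  by rewrite bcoefS coef_Rpoly_mulrn // coef_Rpoly_succ // mulrCA -mulrDr.
rewrite !coef_Rpoly; have [-> ->] : (k <= n)%N = false /\ (k.+1 <= n)%N = false by lia.
by rewrite mul0rn mulr0 addr0.
Qed.

Lemma bcoef_last_gt0 : (1 <= n)%N -> 0 < bcoef n a n.+1.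
Proof. by move=> n1; rewrite bcoefS subnn muln0 mulr0 addr0 mulr_gt0 ?ltr0n ?muln_gt0. Qed.

Lemma bcoef_ge0_mono (k l : nat) : a < 0 -> (0 < k <= l)%N -> (l <= n.+1)%N ->
  0 <= bcoef n a k -> 0 <= bcoef n a l.
Proof.
move=> a0 /andP[k0 kl] ln; rewrite -(prednK k0) -(prednK (leq_trans k0 kl)) !bcoefS.
rewrite !pmulr_rge0 // => bk; apply: le_trans bk _; apply: lerD.
  by rewrite ler_nat; nia.
by apply: ler_wnM2l; [exact: ltW | rewrite ler_nat; nia].
Qed.

End Coefficients.

Theorem mainTheorem4 (R : rcfType) (n : nat) (a : R) :
  (1 <= n)%N -> a < 0 ->
  (exists! w : R, 0 < w /\ root (calR n a) w) /\
  calR n a = \sum_(k < n.+2) bcoef n a k *: 'X^k.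
Proof.
move=> n1 a0; rewrite calR_poly -poly_def; split=> //.
have lead : lead_coef (\poly_(k < n.+2) bcoef n a k) = bcoef n a n.+1.
  by rewrite lead_coef_poly // gt_eqF // bcoef_last_gt0.
apply: one_sign_change_unique_pos_root; first by rewrite coef_poly.
  by rewrite lead bcoef_last_gt0.
move=> k l kl; rewrite !coef_poly.
case: (ltnP l n.+2) => ln; last by rewrite lexx; case: ifP.
case/andP: kl => k0 kl; rewrite (leq_ltn_trans kl ln).
by apply: bcoef_ge0_mono; rewrite ?k0.
Qed.
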